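(* Let $G$ and $N$ be finitely presented groups and $Q$ a finite group. The following are equivalent: (1) there is a surjective homomorphism $G\to N\times Q$; (2) there is a surjective homomorphism $\tau:G\to Q$ and a $(Q,\tau)$-presentation $\langle\mathcal X\cup\mathcal Y\mid\mathcal R\rangle$ of $G$, with $\mathcal X=\{x_1,\dots,x_t\}$ and $\mathcal Y=\{y_1,\dots,y_\ell\}$, such that there is an assignment $x_j\mapsto h_j\in N$, $y_j\mapsto k_j\in N$ under which every relator $r\in\mathcal R$ evaluates to $1_N$ (each letter $x_j^{\pm1}$ replaced by $h_j^{\pm1}$, each $y_j^{\pm1}$ by $k_j^{\pm1}$) and $\langle k_1,\dots,k_\ell\rangle=N$.
   Context: Let $\tau:G\to Q$ be an epimorphism. A $(Q,\tau)$-presentation of $G$ is a presentation $\langle\mathcal X\cup\mathcal Y\mid\mathcal R\rangle$ of $G$ with $\mathcal X,\mathcal Y,\mathcal R$ finite, the generators in $\mathcal X$ representing elements of $G$ on which $\tau$ restricts to a bijection $\mathcal X\to Q$, and the elements represented by $\mathcal Y$ generating $\ker(\tau)$. (In the paper, condition (2) is phrased as: the problem ''EquationsSubspan'' answers Yes on input $N$ and the system of equations without constants obtained from $\mathcal R$ by replacing each $x_j$ by a variable $X_j$ and each $y_j$ by a variable $Y_j$, i.e. there is a solution $\sigma$ with $\langle\sigma(Y_1),\dots,\sigma(Y_\ell)\rangle=N$.) *)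

(* Groups here are possibly infinite,
   so we use an honest record of a group rather than finGroupType. *)
From Stdlib Require List.
From mathcomp Require Import all_boot.
Set Implicit Arguments. Unset Strict Implicit. Unset Printing Implicit Defensive.

Record group := Group {
  gcar :> Type;
  gmul : gcar -> gcar -> gcar;
  ginv : gcar -> gcar;
  gone : gcar;
  gmulA : forall x y z, gmul x (gmul y z) = gmul (gmul x y) z;
  gmul1 : forall x, gmul gone x = x;
  gmulV : forall x, gmul (ginv x) x = gone
}.
Arguments gmul {g}. Arguments ginv {g}. Arguments gone {g}.

Definition is_hom (G H : group) (f : G -> H) : Prop :=
  forall x y, f (gmul x y) = gmul (f x) (f y).

Definition prod_mul (G H : group) (p q : G * H) : G * H :=
  (gmul p.1 q.1, gmul p.2 q.2).
Definition prod_inv (G H : group) (p : G * H) : G * H := (ginv p.1, ginv p.2).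

Lemma prod_mulA (G H : group) (x y z : G * H) :
  prod_mul x (prod_mul y z) = prod_mul (prod_mul x y) z.
Proof. by rewrite /prod_mul /= !gmulA. Qed.
Lemma prod_mul1 (G H : group) (x : G * H) : prod_mul (gone, gone) x = x.
Proof. by case: x => a b; rewrite /prod_mul /= !gmul1. Qed.
Lemma prod_mulV (G H : group) (x : G * H) : prod_mul (prod_inv x) x = (gone, gone).
Proof. by case: x => a b; rewrite /prod_mul /= !gmulV. Qed.

Definition prod_group (G H : group) : group :=
  @Group (G * H)%type (@prod_mul G H) (@prod_inv G H) (gone, gone)
    (@prod_mulA G H) (@prod_mul1 G H) (@prod_mulV G H).

Definition finite_group (Q : group) : Prop :=
  exists (n : nat) (e : 'I_n -> Q), forall q : Q, exists i, e i = q.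

(* Words over an alphabet V of generators: letters (v, b), b = true means v^-1. *)
Definition word (V : Type) := seq (V * bool).

Definition eval_letter (G : group) (V : Type) (a : V -> G) (l : V * bool) : G :=
  if l.2 then ginv (a l.1) else a l.1.

Definition eval_word (G : group) (V : Type) (a : V -> G) (w : word V) : G :=
  foldr (fun l acc => gmul (eval_letter a l) acc) gone w.

(* Equality of words in the group <V | R>: the congruence generated by
   free reduction and insertion of relators. *)
Inductive wequiv (V : Type) (R : seq (word V)) : word V -> word V -> Prop :=
  | wequiv_refl w : wequiv R w w
  | wequiv_sym u v : wequiv R u v -> wequiv R v u
  | wequiv_trans u v w : wequiv R u v -> wequiv R v w -> wequiv R u w
  | wequiv_free u v x b :
      wequiv R (u ++ v) (u ++ [:: (x, b); (x, ~~ b)] ++ v)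
  | wequiv_rel u v r : List.In r R -> wequiv R (u ++ v) (u ++ r ++ v).

Definition is_presentation (G : group) (V : Type) (a : V -> G) (R : seq (word V)) : Prop :=
  (forall g : G, exists w : word V, eval_word a w = g) /\
  (forall w : word V, eval_word a w = gone <-> wequiv R w [::]).

Definition finitely_presented (G : group) : Prop :=
  exists (n : nat) (a : 'I_n -> G) (R : seq (word 'I_n)), is_presentation a R.

Definition in_span (G : group) (V : Type) (s : V -> G) (g : G) : Prop :=
  exists w : word V, eval_word s w = g.

(* A (Q,tau)-presentation of G with X = {x_1..x_t} (images xg) and
   Y = {y_1..y_l} (images yg), generator alphabet 'I_t + 'I_l. *)
Definition QT_presentation (G Q : group) (tau : G -> Q) (t l : nat)
    (xg : 'I_t -> G) (yg : 'I_l -> G) (R : seq (word ('I_t + 'I_l))) : Prop :=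
  [/\ is_presentation (fun v => match v with inl i => xg i | inr j => yg j end) R,
      bijective (fun i => tau (xg i))
    & forall g : G, tau g = gone <-> in_span yg g].

(* Given f = (phi, tau) from G onto N x Q, pick a section x of tau. The
   Schreier generators x(q) a x(q tau(a))^-1 generate ker tau, so together with
   the finitely many x(q) they generate G, and a Tietze transformation of a
   finite presentation of G turns them into a (Q,tau)-presentation. Its relators
   die under phi, and phi maps ker tau onto N because f is onto. Conversely, by
   von Dyck's theorem the assignment extends to phi : G -> N; then (phi, tau) is
   onto, as tau is onto and phi(ker tau) = <k_1, ..., k_l> = N. *)

From Stdlib Require List.
From Stdlib Require Import IndefiniteDescription.
From mathcomp Require Import all_boot.
Set Implicit Arguments. Unset Strict Implicit. Unset Printing Implicit Defensive.

Section GroupTheory.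
Variable G : group.
Implicit Types x y : G.

Lemma mulgV x : gmul x (ginv x) = gone.
Proof.
rewrite -[gmul x (ginv x)]gmul1 -{1}(gmulV (ginv x)).
by rewrite -gmulA (gmulA (ginv x) x (ginv x)) gmulV gmul1 gmulV.
Qed.

Lemma mulg1 x : gmul x gone = x.
Proof. by rewrite -(gmulV x) gmulA mulgV gmul1. Qed.

Lemma mulgKV x y : gmul (gmul y (ginv x)) x = y.
Proof. by rewrite -gmulA gmulV mulg1. Qed.

Lemma mulgK x y : gmul (gmul y x) (ginv x) = y.
Proof. by rewrite -gmulA mulgV mulg1. Qed.

Lemma mulg_eq1_inv x y : gmul x y = gone -> x = ginv y.
Proof. by move=> xy1; rewrite -(mulgK y x) xy1 gmul1. Qed.

Lemma invgK x : ginv (ginv x) = x.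
Proof. by rewrite -[LHS]mulg1 -(gmulV x) gmulA gmulV gmul1. Qed.

Lemma invMg x y : ginv (gmul x y) = gmul (ginv y) (ginv x).
Proof. by apply/esym/mulg_eq1_inv; rewrite gmulA -(gmulA (ginv y)) gmulV mulg1 gmulV. Qed.

Lemma invg1 : ginv (gone : G) = gone.
Proof. by apply/esym/mulg_eq1_inv; rewrite gmul1. Qed.

Lemma mulgg_eq1 x : gmul x x = x -> x = gone.
Proof. by move=> xx; rewrite -(gmulV x) -{3}xx gmulA gmulV gmul1. Qed.

End GroupTheory.

Section Homomorphisms.
Variables (G H : group) (f : G -> H).
Hypothesis f_hom : is_hom f.

Lemma hom1 : f gone = gone.
Proof. by apply: mulgg_eq1; rewrite -f_hom gmul1. Qed.

Lemma homV x : f (ginv x) = ginv (f x).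
Proof. by apply: mulg_eq1_inv; rewrite -f_hom gmulV hom1. Qed.

End Homomorphisms.

Fixpoint winv V (w : word V) : word V :=
  if w is l :: w' then winv w' ++ [:: (l.1, ~~ l.2)] else [::].

Fixpoint wsubst A B (s : A -> word B) (w : word A) : word B :=
  if w is l :: w' then (if l.2 then winv (s l.1) else s l.1) ++ wsubst s w'
  else [::].

Lemma winv_cat V (u v : word V) : winv (u ++ v) = winv v ++ winv u.
Proof. by elim: u => [|l u IH] /=; rewrite ?cats0 // IH catA. Qed.

Lemma winvK V : involutive (@winv V).
Proof. by elim=> [|[x b] w IH] //=; rewrite winv_cat IH /= negbK. Qed.

Lemma wsubst_cat A B (s : A -> word B) u v :
  wsubst s (u ++ v) = wsubst s u ++ wsubst s v.
Proof. by elim: u => [|l u IH] //=; rewrite IH catA. Qed.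

Lemma wsubst_winv A B (s : A -> word B) w :
  wsubst s (winv w) = winv (wsubst s w).
Proof.
elim: w => [|[x b] w IH] //=.
by rewrite wsubst_cat IH winv_cat /= cats0; case: b; rewrite ?winvK.
Qed.

Lemma eval_word_nil (G : group) V (a : V -> G) : eval_word a [::] = gone.
Proof. by []. Qed.

Lemma eval_word_cons (G : group) V (a : V -> G) l w :
  eval_word a (l :: w) = gmul (eval_letter a l) (eval_word a w).
Proof. by []. Qed.

Arguments eval_word : simpl never.

Section Evaluation.
Variable G : group.

Lemma eval_word_gen V (a : V -> G) v : eval_word a [:: (v, false)] = a v.
Proof. exact: mulg1. Qed.

Lemma eval_word_cat V (a : V -> G) u w :
  eval_word a (u ++ w) = gmul (eval_word a u) (eval_word a w).
Proof.
elim: u => [|l u IH]; first by rewrite eval_word_nil gmul1.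
by rewrite cat_cons !eval_word_cons IH gmulA.
Qed.

Lemma eval_word_winv V (a : V -> G) w : eval_word a (winv w) = ginv (eval_word a w).
Proof.
elim: w => [|[x b] w IH]; first by rewrite /= eval_word_nil invg1.
rewrite [winv _]/= eval_word_cat IH eval_word_cons /eval_letter /= mulg1 invMg.
by case: b; rewrite /= ?invgK.
Qed.

Lemma eq_eval_word V (a b : V -> G) w : a =1 b -> eval_word a w = eval_word b w.
Proof.
by move=> eq_ab; elim: w => [|[x c] w IH] //; rewrite !eval_word_cons IH /eval_letter eq_ab.
Qed.

Lemma eval_word_const1 V (w : word V) : eval_word (fun _ => gone : G) w = gone.
Proof.
elim: w => [|[x c] w IH] //.
by rewrite eval_word_cons IH mulg1 /eval_letter; case: c; rewrite ?invg1.
Qed.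

Lemma eval_word_subst V B (a : B -> G) (s : V -> word B) w :
  eval_word a (wsubst s w) = eval_word (fun v => eval_word a (s v)) w.
Proof.
elim: w => [|[x c] w IH] //.
rewrite /= eval_word_cat IH eval_word_cons /eval_letter /=.
by case: c; rewrite ?eval_word_winv.
Qed.

Lemma hom_eval_word V (H : group) (f : G -> H) (a : V -> G) w : is_hom f ->
  f (eval_word a w) = eval_word (fun v => f (a v)) w.
Proof.
move=> f_hom; elim: w => [|[x c] w IH]; first exact: hom1.
by rewrite !eval_word_cons f_hom IH /eval_letter; case: c; rewrite ?(homV f_hom).
Qed.

End Evaluation.

Section WordEquivalence.
Variables (V : Type) (R : seq (word V)).
Notation "u ~ v" := (wequiv R u v) (at level 70).

Lemma wequiv_eval (H : group) (b : V -> H) :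
  (forall r, List.In r R -> eval_word b r = gone) ->
  forall u v, u ~ v -> eval_word b u = eval_word b v.
Proof.
move=> Rb u v; elim=> {u v} //.
- by move=> u v w _ -> _ ->.
- move=> u v x c; rewrite !eval_word_cat !eval_word_cons eval_word_nil /eval_letter /=.
  by case: c; rewrite /= mulg1 ?gmulV ?mulgV gmul1.
- by move=> u v r /Rb r1; rewrite !eval_word_cat r1 gmul1.
Qed.

Lemma wequiv_ctx p s u v : u ~ v -> (p ++ u ++ s) ~ (p ++ v ++ s).
Proof.
elim=> {u v}.
- by move=> w; apply: wequiv_refl.
- by move=> u v _; apply: wequiv_sym.
- by move=> u v w _ uv _; apply: wequiv_trans uv.
- by move=> u v x b; have := wequiv_free R (p ++ u) (v ++ s) x b; rewrite -!catA.
- by move=> u v r Rr; have := wequiv_rel (p ++ u) (v ++ s) Rr; rewrite -!catA.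
Qed.

Lemma wequiv_cat u u' v v' : u ~ u' -> v ~ v' -> (u ++ v) ~ (u' ++ v').
Proof.
move=> uu' vv'; apply: (@wequiv_trans _ _ _ (u' ++ v)).
  by have := wequiv_ctx [::] v uu'.
by have := wequiv_ctx u' [::] vv'; rewrite !cats0.
Qed.

Lemma wequiv_relator r : List.In r R -> r ~ [::].
Proof.
by move=> Rr; apply: wequiv_sym; have := wequiv_rel [::] [::] Rr; rewrite /= cats0.
Qed.

Lemma wequiv_cancel x b : [:: (x, b); (x, ~~ b)] ~ [::].
Proof. by apply: wequiv_sym; have := wequiv_free R [::] [::] x b. Qed.

Lemma wequiv_mulV w : (w ++ winv w) ~ [::].
Proof.
elim: w => [|[x b] w IH] /=; first exact: wequiv_refl.
have -> : (x, b) :: w ++ winv w ++ [:: (x, ~~ b)] =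
  [:: (x, b)] ++ (w ++ winv w) ++ [:: (x, ~~ b)] by rewrite /= catA.
exact: wequiv_trans (wequiv_ctx [:: (x, b)] [:: (x, ~~ b)] IH) (wequiv_cancel x b).
Qed.

Lemma wequiv_Vmul w : (winv w ++ w) ~ [::].
Proof. by have := wequiv_mulV (winv w); rewrite winvK. Qed.

Lemma wequiv_winv u v : u ~ v -> winv u ~ winv v.
Proof.
move=> uv; apply: (@wequiv_trans _ _ _ (winv u ++ v ++ winv v)).
  by have := wequiv_cat (wequiv_refl R (winv u)) (wequiv_sym (wequiv_mulV v)); rewrite cats0.
rewrite catA; have := wequiv_cat (wequiv_Vmul u) (wequiv_refl R (winv v)); apply: wequiv_trans.
exact: wequiv_cat (wequiv_cat (wequiv_refl _ _) (wequiv_sym uv)) (wequiv_refl _ _).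
Qed.

End WordEquivalence.

Lemma wequiv_wsubst A B (s : A -> word B) (R0 : seq (word A)) (R : seq (word B)) :
  (forall r, List.In r R0 -> wequiv R (wsubst s r) [::]) ->
  forall u v, wequiv R0 u v -> wequiv R (wsubst s u) (wsubst s v).
Proof.
move=> R0s u v; elim=> {u v}.
- by move=> w; apply: wequiv_refl.
- by move=> u v _; apply: wequiv_sym.
- by move=> u v w _ uv _; apply: wequiv_trans uv.
- move=> u v x b; rewrite !wsubst_cat /= catA; apply: wequiv_sym.
  have := wequiv_ctx (wsubst s u) (wsubst s v) (_ : wequiv R
    ((if b then winv (s x) else s x) ++ (if ~~ b then winv (s x) else s x)) [::]).
  rewrite /= -!catA; apply.
  by case: b; [apply: wequiv_Vmul | apply: wequiv_mulV].
- move=> u v r /R0s rs; rewrite !wsubst_cat; apply: wequiv_sym.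
  exact: wequiv_ctx rs.
Qed.

Section Spans.
Variables (G : group) (V : Type) (s : V -> G).

Lemma in_span1 : in_span s gone.
Proof. by exists [::]. Qed.

Lemma in_span_gen v : in_span s (s v).
Proof. by exists [:: (v, false)]; apply: eval_word_gen. Qed.

Lemma in_spanM g h : in_span s g -> in_span s h -> in_span s (gmul g h).
Proof. by move=> [u <-] [w <-]; exists (u ++ w); apply: eval_word_cat. Qed.

Lemma in_spanV g : in_span s g -> in_span s (ginv g).
Proof. by move=> [w <-]; exists (winv w); apply: eval_word_winv. Qed.

Lemma in_span_trans W (s' : W -> G) g :
  (forall v, in_span s' (s v)) -> in_span s g -> in_span s' g.
Proof.
move=> /functional_choice [ws s_ws] [w <-].
by exists (wsubst ws w); rewrite eval_word_subst (eq_eval_word _ s_ws).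
Qed.

Lemma in_span_hom (H : group) (f : G -> H) g :
  is_hom f -> in_span s g -> in_span (fun v => f (s v)) (f g).
Proof. by move=> f_hom [w <-]; exists w; rewrite hom_eval_word. Qed.

Lemma in_span_ker (H : group) (f : G -> H) g :
  is_hom f -> (forall v, f (s v) = gone) -> in_span s g -> f g = gone.
Proof.
move=> f_hom s_ker [w <-].
by rewrite hom_eval_word // (eq_eval_word _ s_ker) eval_word_const1.
Qed.

End Spans.

Lemma ord_bijective_of_surj (T : Type) m (e : 'I_m -> T) :
  (forall x, exists i, e i = x) -> exists t (E : 'I_t -> T), bijective E.
Proof.
move=> /functional_choice [r e_r].
pose S := [set i | r (e i) == i].
have S_r x : r x \in S by rewrite inE e_r.
pose E (k : 'I_#|S|) := e (enum_val k).
have E_inj : injective E.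
  move=> k1 k2 /(congr1 r); rewrite /E.
  have := enum_valP k1; have := enum_valP k2; rewrite !inE => /eqP -> /eqP.
  by move=> /[swap] -> /enum_val_inj.
have E_surj x : exists k, E k = x.
  by exists (enum_rank_in (S_r x) (r x)); rewrite /E enum_rankK_in ?e_r.
case/functional_choice: E_surj => Einv EK.
by exists #|S|, E, Einv => // k; apply: E_inj; rewrite EK.
Qed.

Lemma In_mem (T : eqType) (x : T) s : x \in s -> List.In x s.
Proof. by elim: s => [|y s IH] //=; rewrite in_cons => /orP [/eqP ->|/IH]; auto. Qed.

Lemma presentation_of_generators (G : group) A (a : A -> G) (R0 : seq (word A))
    (Z : finType) (z : Z -> G) :
  is_presentation a R0 -> (forall g, in_span z g) -> exists R, is_presentation z R.
Proof.
move=> [a_gen a_rel] z_gen.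
have /functional_choice [alpha z_alpha] i : in_span z (a i) := z_gen (a i).
have /functional_choice [beta a_beta] y : exists w, eval_word a w = z y := a_gen (z y).
pose R := map (wsubst alpha) R0 ++ [seq (y, true) :: wsubst alpha (beta y) | y <- enum Z].
have R_z r : List.In r R -> eval_word z r = gone.
  case/List.in_app_iff => /List.in_map_iff [x [<- Rx]].
    by rewrite eval_word_subst (eq_eval_word _ z_alpha); apply/a_rel/wequiv_relator.
  by rewrite eval_word_cons eval_word_subst (eq_eval_word _ z_alpha) a_beta /eval_letter gmulV.
have gen_alpha_beta y : wequiv R [:: (y, false)] (wsubst alpha (beta y)).
  have Ry : List.In ((y, true) :: wsubst alpha (beta y)) R.
    by apply/List.in_app_iff; right; apply/List.in_map/In_mem; rewrite mem_enum.
  apply: (@wequiv_trans _ _ _ ([:: (y, false)] ++ (y, true) :: wsubst alpha (beta y))).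
    have := wequiv_cat (wequiv_refl R [:: (y, false)]) (wequiv_sym (wequiv_relator Ry)).
    by rewrite cats0.
  exact: wequiv_cat (wequiv_cancel R y false) (wequiv_refl R _).
have word_alpha_beta w : wequiv R w (wsubst alpha (wsubst beta w)).
  elim: w => [|[y b] w IH]; first exact: wequiv_refl.
  rewrite [wsubst beta _]/= wsubst_cat -cat1s; apply: wequiv_cat IH.
  case: b; rewrite /= ?wsubst_winv; last exact: gen_alpha_beta.
  exact: wequiv_winv (gen_alpha_beta y).
have alpha_R0 r : List.In r R0 -> wequiv R (wsubst alpha r) [::].
  by move=> Rr; apply/wequiv_relator/List.in_app_iff; left; apply: List.in_map.
exists R; split=> // w; split=> [w1 | /(wequiv_eval R_z) //].
have beta_w : wequiv R0 (wsubst beta w) [::].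
  by apply/a_rel; rewrite eval_word_subst (eq_eval_word _ a_beta).
exact: wequiv_trans (word_alpha_beta w) (wequiv_wsubst alpha_R0 beta_w).
Qed.

Section Schreier.
Variables (G Q : group) (tau : G -> Q) (V I : Type).
Variables (a : V -> G) (E : I -> Q) (x : Q -> G).
Hypothesis tau_hom : is_hom tau.
Hypothesis x_section : forall q, tau (x q) = q.

(* [x gone] need not be [gone], so it is kept as an extra generator. *)
Definition schreier_gen (y : option (I * V)) : G :=
  if y is Some (i, v) then gmul (gmul (x (E i)) (a v)) (ginv (x (gmul (E i) (tau (a v)))))
  else x gone.

Lemma schreier_gen_ker y : tau (schreier_gen y) = gone.
Proof.
case: y => [[i v]|] /=; last exact: x_section.
by rewrite !tau_hom (homV tau_hom) !x_section mulgV.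
Qed.

Hypothesis a_gen : forall g, in_span a g.
Hypothesis E_surj : forall q, exists i, E i = q.

Lemma ker_schreier_span g : tau g = gone -> in_span schreier_gen g.
Proof.
pose coset_err q h := gmul (gmul (x q) h) (ginv (x (gmul q (tau h)))).
have err_word w q : in_span schreier_gen (coset_err q (eval_word a w)).
  elim: w q => [|[v b] w IH] q.
    by rewrite /coset_err eval_word_nil (hom1 tau_hom) !mulg1 mulgV; apply: in_span1.
  rewrite /coset_err eval_word_cons tau_hom /eval_letter /=; case: b.
  - have [i Ei] := E_surj (gmul q (ginv (tau (a v)))).
    have := in_spanM (in_spanV (in_span_gen schreier_gen (Some (i, v)))) (IH (E i)).
    by rewrite /coset_err /= Ei mulgKV (homV tau_hom) !invMg !invgK !gmulA mulgKV.
  - have [i Ei] := E_surj q.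
    have := in_spanM (in_span_gen schreier_gen (Some (i, v))) (IH (gmul q (tau (a v)))).
    by rewrite /coset_err /= Ei !gmulA mulgKV.
move=> tau_g; have [w a_w] := a_gen g.
have := err_word w gone; rewrite /coset_err a_w tau_g gmul1 => err_g.
have -> : g = gmul (gmul (ginv (x gone)) (gmul (gmul (x gone) g) (ginv (x gone)))) (x gone).
  by rewrite !gmulA gmulV gmul1 mulgKV.
apply: in_spanM (in_span_gen schreier_gen None).
exact: in_spanM (in_spanV (in_span_gen schreier_gen None)) err_g.
Qed.

End Schreier.

Lemma QT_presentation_exists (G Q : group) (tau : G -> Q) :
  finitely_presented G -> finite_group Q -> is_hom tau -> (forall q, exists g, tau g = q) ->
  exists t l (xg : 'I_t -> G) (yg : 'I_l -> G) (R : seq (word ('I_t + 'I_l))),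
    QT_presentation tau xg yg R.
Proof.
move=> [n [a [R0 a_pres]]] [m [e e_surj]] tau_hom /functional_choice [x x_section].
have [t [E [Einv EK EinvK]]] := ord_bijective_of_surj e_surj.
have E_surj q : exists i, E i = q by exists (Einv q).
pose yg (j : 'I_#|{: option ('I_t * 'I_n)}|) := schreier_gen tau a E x (enum_val j).
pose xg i := x (E i).
have ker_yg g : tau g = gone <-> in_span yg g.
  split=> [/(ker_schreier_span x tau_hom a_pres.1 E_surj) | ].
    by apply: in_span_trans => y; rewrite -(enum_rankK y); apply: in_span_gen.
  by apply: (in_span_ker tau_hom) => j; apply: (schreier_gen_ker a E tau_hom x_section).
pose c v := match v with inl i => xg i | inr j => yg j end.
have c_gen g : in_span c g.
  rewrite -(mulgKV (x (tau g)) g); apply: in_spanM.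
    apply: in_span_trans (fun j => in_span_gen c (inr j)) _.
    by apply/ker_yg; rewrite tau_hom (homV tau_hom) x_section mulgV.
  by rewrite -[tau g]EinvK; apply: (in_span_gen c (inl (Einv (tau g)))).
have [R c_pres] := presentation_of_generators a_pres c_gen.
exists t, _, xg, yg, R; split=> //.
by apply: (eq_bij (Bijective EK EinvK)) => i; rewrite x_section.
Qed.

Lemma von_dyck (G H : group) V (a : V -> G) (R : seq (word V)) (b : V -> H) :
  is_presentation a R -> (forall r, List.In r R -> eval_word b r = gone) ->
  exists phi : G -> H, is_hom phi /\ forall w, phi (eval_word a w) = eval_word b w.
Proof.
move=> [/functional_choice [wd a_wd] a_rel] R_b.
have eval_b_eq u v : eval_word a u = eval_word a v -> eval_word b u = eval_word b v.
  move=> uv; have /(wequiv_eval R_b) : wequiv R (u ++ winv v) [::].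
    by apply/a_rel; rewrite eval_word_cat eval_word_winv uv mulgV.
  by rewrite eval_word_cat eval_word_winv eval_word_nil => /mulg_eq1_inv; rewrite invgK.
have phi_eval w : eval_word b (wd (eval_word a w)) = eval_word b w.
  by apply: eval_b_eq; rewrite a_wd.
exists (fun g => eval_word b (wd g)); split=> // g h.
by rewrite -{1}(a_wd g) -{1}(a_wd h) -eval_word_cat phi_eval eval_word_cat.
Qed.

Lemma prod_hom_surj (G N Q : group) (phi : G -> N) (tau : G -> Q) :
  is_hom phi -> is_hom tau -> (forall q, exists g, tau g = q) ->
  (forall n, exists2 g, tau g = gone & phi g = n) ->
  forall z : prod_group N Q, exists g, (phi g, tau g) = z.
Proof.
move=> phi_hom tau_hom tau_surj ker_surj [n q].
have [g0 <-] := tau_surj q.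
have [g1 tau_g1 phi_g1] := ker_surj (gmul n (ginv (phi g0))).
by exists (gmul g1 g0); rewrite phi_hom tau_hom phi_g1 tau_g1 mulgKV gmul1.
Qed.

Unset Implicit Arguments.
Theorem lemma3p2 (G N Q : group) :
  finitely_presented G -> finitely_presented N -> finite_group Q ->
  ((exists f : G -> prod_group N Q, is_hom f /\ forall z, exists g, f g = z)
   <->
   (exists tau : G -> Q, [/\ is_hom tau, (forall q, exists g, tau g = q) &
     exists (t l : nat) (xg : 'I_t -> G) (yg : 'I_l -> G)
            (R : seq (word ('I_t + 'I_l))),
       QT_presentation tau xg yg R /\
       exists (h : 'I_t -> N) (k : 'I_l -> N),
         (forall r, List.In r R ->
            eval_word (fun v => match v with inl i => h i | inr j => k j end) r = gone)
         /\ (forall n : N, in_span k n)])).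
Proof.
move=> G_fp _ Q_fin; split.
- move=> [f [f_hom f_surj]].
  pose phi g := (f g).1; pose tau g := (f g).2.
  have phi_hom : is_hom phi by move=> g h; rewrite /phi f_hom.
  have tau_hom : is_hom tau by move=> g h; rewrite /tau f_hom.
  have tau_surj q : exists g, tau g = q.
    by have [g fg] := f_surj (gone, q); exists g; rewrite /tau fg.
  exists tau; split=> //.
  have [t [l [xg [yg [R pres]]]]] := QT_presentation_exists G_fp Q_fin tau_hom tau_surj.
  exists t, l, xg, yg, R; split=> //; case: pres => [[_ c_rel] _ ker_yg].
  exists (fun i => phi (xg i)), (fun j => phi (yg j)); split=> [r Rr | n].
    rewrite -(hom1 phi_hom) -(proj2 (c_rel r) (wequiv_relator Rr)) hom_eval_word //.
    by apply: eq_eval_word => -[].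
  have [g fg] := f_surj (n, gone).
  have /ker_yg /(in_span_hom phi_hom) : tau g = gone by rewrite /tau fg.
  by rewrite /phi fg.
- move=> [tau [tau_hom tau_surj [t [l [xg [yg [R [[c_pres _ ker_yg] [h [k [R_hk k_gen]]]]]]]]]]].
  have [phi [phi_hom phi_eval]] := von_dyck c_pres R_hk.
  exists (fun g => (phi g, tau g)); split; first by move=> g g'; rewrite phi_hom tau_hom.
  apply: prod_hom_surj => // n; have [w <-] := k_gen n.
  exists (eval_word yg w); first by apply/ker_yg; exists w.
  rewrite hom_eval_word //; apply: eq_eval_word => j.
  by have := phi_eval [:: (inr j, false)]; rewrite !eval_word_gen.
Qed.
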